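(* Let $D$ be a sqrt-bounded degree function and consider a GSAT maintained under get, insert and delete operations with counter-based rebuilding. Not counting the time of searching inside a node, the amortized cost of an insert, delete or get operation is $O(\log m)$; that is, the total cost of the first $m$ operations is $O(m\log m)$.
   Context: A function $f$ is sqrt-bounded if $f(m)\ge 1$ for all $m$ and there is a constant $M^*$ with $f(m)\le\max(\sqrt m,M^* )$ for all $m$. A Generic Self-Adjusting Tree (GSAT) with degree function $D$ for a set of integer keys $X=\{x_1<\dots<x_n\}$ with access counts $ac_i\ge1$ consists of $m=\sum_i ac_i$, an array of $k\le\lceil D(m)\rceil$ representative keys $x_{i_1}<\dots<x_{i_k}$ with their access counts, and $k+1$ child subtrees that are GSATs for the keys strictly before $x_{i_1}$, strictly between consecutive representatives, and strictly after $x_{i_k}$. For a subtree $T'$, $m(T')$ is the total access count of keys in $T'$. A GSAT is ideal if each child $T_j$ of the root satisfies $m(T_j)\le m/(D(m)+1)$ and each child is ideal. Dynamic operations: each node $v$ (root of subtree $T_v$) has a counter $C(v)$ and a value $im(T_v)$ equal to $m(T_v)$ at the time $T_v$ was last (re)built. An operation get/insert/delete on key $x$ walks down from the root along the search path of $x$, increments $C(v)$ for every visited node and increments the access count of $x$ if found; insert of an absent key creates a new node holding $x$ with access count 1 attached as a child of the last visited node; delete only marks the key. Afterwards, among the visited nodes $v$ with $C(v)>im(T_v)/4$, the one $u$ of minimum depth (if any) is chosen and $T_u$ is rebuilt into an ideal GSAT for its unmarked keys with their current access counts, counters set to $0$ and $im$ values reset. Cost of an operation: number of visited nodes plus, if a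 rebuild happens, $O(m(T_u))$ for rebuilding $T_u$. *)

From Stdlib Require Import Reals Lra Lia ZArith Arith List Sorting.Sorted Permutation.
Import ListNotations.
Open Scope R_scope.

Definition sqrt_bounded (D : nat -> R) : Prop :=
  (forall m, 1 <= D m) /\
  exists Mstar : R, forall m, D m <= Rmax (sqrt (INR m)) Mstar.

(** ceiling of a real: ceil x = - floor (- x), with floor y = up y - 1. *)
Definition Rceil (x : R) : Z := (1 - up (- x))%Z.

Record rep := mkRep { key : Z; ac : nat; marked : bool }.

(** A node stores its representatives (left to right), its children
    (one more than representatives), its counter C(v) and im(T_v). *)
Inductive gsat : Type :=
| Leaf : gsat
| Node (reps : list rep) (children : list gsat) (cnt : nat) (im : nat) : gsat.

Fixpoint mass (t : gsat) : nat :=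
  match t with
  | Leaf => 0
  | Node rs ch _ _ =>
      list_sum (map ac rs) +
      (fix go (l : list gsat) : nat :=
         match l with [] => 0 | c :: l' => (mass c + go l')%nat end) ch
  end%nat.

Fixpoint all_reps (t : gsat) : list rep :=
  match t with
  | Leaf => []
  | Node rs ch _ _ =>
      rs ++ (fix go (l : list gsat) : list rep :=
               match l with [] => [] | c :: l' => all_reps c ++ go l' end) ch
  end.

Definition all_keys (t : gsat) : list Z := map key (all_reps t).

Definition above (lo : option Z) (y : Z) : Prop :=
  match lo with None => True | Some a => (a < y)%Z end.
Definition below (hi : option Z) (y : Z) : Prop :=
  match hi with None => True | Some b => (y < b)%Z end.

(** Child j of a node with representatives rs holds keys strictly between
    the (j-1)-th and the j-th representative (open ends at the borders). *)
Definition child_bounds (rs : list rep) : list (option Z * option Z) :=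
  combine (None :: map (fun r => Some (key r)) rs)
          (map (fun r => Some (key r)) rs ++ [None]).

Inductive ideal (D : nat -> R) : gsat -> Prop :=
| ideal_leaf : ideal D Leaf
| ideal_node (rs : list rep) (ch : list gsat) (C im : nat) :
    rs <> [] ->
    Sorted Z.lt (map key rs) ->
    (Z.of_nat (length rs) <= Rceil (D (mass (Node rs ch C im))))%Z ->
    Forall2 (fun c b => Forall (fun y => above (fst b) y /\ below (snd b) y)
                                (all_keys c))
            ch (child_bounds rs) ->
    Forall (fun c => INR (mass c) <= INR (mass (Node rs ch C im))
                                      / (D (mass (Node rs ch C im)) + 1)) ch ->
    Forall (ideal D) ch ->
    ideal D (Node rs ch C im).

Inductive fresh : gsat -> Prop :=
| fresh_leaf : fresh Leaf
| fresh_node (rs : list rep) (ch : list gsat) :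
    Forall fresh ch ->
    fresh (Node rs ch 0 (mass (Node rs ch 0 0))).

Definition rebuild_ok (D : nat -> R) (t t' : gsat) : Prop :=
  ideal D t' /\ fresh t' /\
  Forall (fun r => marked r = false) (all_reps t') /\
  Permutation (map (fun r => (key r, ac r)) (all_reps t'))
              (map (fun r => (key r, ac r))
                   (filter (fun r => negb (marked r)) (all_reps t))).

Inductive opkind := Get | Insert | Delete.
Definition operation : Type := (opkind * Z)%type.

Definition touch (k : opkind) (r : rep) : rep :=
  match k with
  | Get => mkRep (key r) (S (ac r)) (marked r)
  | Insert => mkRep (key r) (S (ac r)) false
  | Delete => mkRep (key r) (S (ac r)) true
  end.

Definition new_node (x : Z) : gsat := Node [mkRep x 1 false] [Leaf; Leaf] 0 1.

Definition leaf_result (k : opkind) (x : Z) : gsat :=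
  match k with Insert => new_node x | _ => Leaf end.

Definition child_index (x : Z) (rs : list rep) : nat :=
  length (filter (fun r => Z.ltb (key r) x) rs).

(** Returns the new tree, the number of visited nodes, and the depth (if
    any) of the shallowest visited node v with C(v) > im(T_v)/4 (C(v) taken
    after the increment). *)
Fixpoint walk (k : opkind) (x : Z) (t : gsat) {struct t} : gsat * nat * option nat :=
  match t with
  | Leaf => (leaf_result k x, 0%nat, None)
  | Node rs ch C im =>
      let C' := S C in
      let q := Nat.ltb im (4 * C') in
      if existsb (fun r => Z.eqb (key r) x) rs then
        (Node (map (fun r => if Z.eqb (key r) x then touch k r else r) rs) ch C' im,
         1%nat, if q then Some 0%nat else None)
      else
        let '(ch', n, o) :=
          (fix go (j : nat) (l : list gsat) {struct l} : list gsat * nat * option nat :=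
             match l with
             | [] => ([], 0%nat, None)
             | c :: l' =>
                 match j with
                 | O =>
                     match c with
                     | Leaf => (leaf_result k x :: l', 0%nat, None)
                     | Node _ _ _ _ =>
                         let '(c', n, o) := walk k x c in (c' :: l', n, o)
                     end
                 | S j' => let '(l'', n, o) := go j' l' in (c :: l'', n, o)
                 end
             end) (child_index x rs) ch in
        (Node rs ch' C' im, S n, if q then Some 0%nat else option_map S o)
  end.

Fixpoint replace_nth {A : Type} (j : nat) (a : A) (l : list A) : list A :=
  match l, j with
  | [], _ => []
  | _ :: l', O => a :: l'
  | b :: l', S j' => b :: replace_nth j' a l'
  end.

Inductive rebuild_at (D : nat -> R) (x : Z) : nat -> gsat -> gsat -> nat -> Prop :=
| rb_here (t t' : gsat) : rebuild_ok D t t' -> rebuild_at D x 0 t t' (mass t)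
| rb_down (d : nat) (rs : list rep) (ch : list gsat) (C im : nat)
          (c c' : gsat) (cost : nat) :
    nth_error ch (child_index x rs) = Some c ->
    rebuild_at D x d c c' cost ->
    rebuild_at D x (S d) (Node rs ch C im)
               (Node rs (replace_nth (child_index x rs) c' ch) C im) cost.

Definition op_step (D : nat -> R) (o : operation) (t t' : gsat) (cost : nat) : Prop :=
  let '(k, x) := o in
  let '(tw, n, q) := walk k x t in
  match q with
  | None => t' = tw /\ cost = n
  | Some d => exists rc, rebuild_at D x d tw t' rc /\ cost = (n + rc)%nat
  end.

Inductive exec (D : nat -> R) : gsat -> list operation -> gsat -> nat -> Prop :=
| exec_nil (t : gsat) : exec D t [] t 0
| exec_cons (t t1 t2 : gsat) (o : operation) (os : list operation) (c1 c2 : nat) :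
    op_step D o t t1 c1 -> exec D t1 os t2 c2 -> exec D t (o :: os) t2 (c1 + c2).

From Stdlib Require Import Reals List Lia Lra Sorting Permutation.
Import ListNotations.
Open Scope nat_scope.

(* The potential phi(T) is the sum of all counters C(v).  Every reachable tree
   satisfies an invariant [inv]: at every node v,
     4 C(v) <= im(T_v),   m(T_v) <= im(T_v) + C(v),
     2 m(c) <= im(T_v) + 2 C(v)  and  2 im(c) <= im(T_v) + 2 C(v)  for each child c,
   so im(c) <= 3/4 im(T_v) along every search path.
   - A walk visiting n nodes raises phi by exactly n and, since im shrinks by a
     factor 3/4 per level, satisfies (4/3)^(n-1) <= im(root) (lemma [walk_depth]).
   - A rebuild of T_u is triggered when 4 C(u) > im(T_u); it costs
     m(T_u) <= im(T_u) + C(u) < 5 C(u) <= 5 phi(T_u), and the rebuilt subtree has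
     potential 0.  Its ideal shape (children of mass <= m/(D(m)+1) <= m/2, as
     D >= 1) restores the invariant (lemma [walk_rebuild]).
   Hence cost + 5 phi grows by at most 6 n <= 6 (1 + log_{4/3} m) per operation
   ([op_step_amortized]), and summing over m operations gives O(m log m). *)

Fixpoint gsat_ind' (P : gsat -> Prop) (HL : P Leaf)
  (HN : forall rs ch C im, Forall P ch -> P (Node rs ch C im)) (t : gsat) : P t :=
  match t with
  | Leaf => HL
  | Node rs ch C im => HN rs ch C im
      ((fix go (l : list gsat) : Forall P l :=
          match l with
          | [] => Forall_nil _
          | c :: l' => Forall_cons _ (gsat_ind' P HL HN c) (go l')
          end) ch)
  end.

Lemma mass_node rs ch C im :
  mass (Node rs ch C im) = list_sum (map ac rs) + list_sum (map mass ch).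
Proof. simpl; f_equal. induction ch as [|c ch IH]; simpl; auto. Qed.

Lemma all_reps_node rs ch C im :
  all_reps (Node rs ch C im) = rs ++ flat_map all_reps ch.
Proof. reflexivity. Qed.

Lemma mass_reps t : mass t = list_sum (map ac (all_reps t)).
Proof.
  induction t as [|rs ch C im IH] using gsat_ind'; auto.
  rewrite mass_node, all_reps_node, map_app, list_sum_app. f_equal.
  induction IH as [|c ch Hc _ IHch]; simpl; auto.
  now rewrite map_app, list_sum_app, Hc, IHch.
Qed.

Lemma Forall_nth_error {A} (P : A -> Prop) l j a :
  Forall P l -> nth_error l j = Some a -> P a.
Proof. rewrite Forall_forall. intros H Hn. eapply H, nth_error_In; eauto. Qed.

Lemma replace_nth_sum {A} (f : A -> nat) l j c a :
  nth_error l j = Some c ->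
  list_sum (map f (replace_nth j a l)) + f c = list_sum (map f l) + f a.
Proof.
  revert j; induction l as [|b l IH]; intros [|j] H; simpl in *; try discriminate.
  - injection H as ->. lia.
  - specialize (IH j H). lia.
Qed.

Lemma nth_error_replace_nth {A} l j (c a : A) :
  nth_error l j = Some c -> nth_error (replace_nth j a l) j = Some a.
Proof. revert j; induction l; intros [|j] H; simpl in *; try discriminate; auto. Qed.

Lemma replace_nth_replace_nth {A} l j (a b : A) :
  replace_nth j b (replace_nth j a l) = replace_nth j b l.
Proof. revert j; induction l as [|c l IH]; intros [|j]; simpl; now rewrite ?IH. Qed.

Lemma Forall_replace_nth {A} (P : A -> Prop) l j a :
  Forall P l -> P a -> Forall P (replace_nth j a l).
Proof. revert j; induction l; intros [|j] H Ha; inversion H; simpl; auto. Qed.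

Definition go_walk (k : opkind) (x : Z) : nat -> list gsat -> list gsat * nat * option nat :=
  fix go (j : nat) (l : list gsat) {struct l} : list gsat * nat * option nat :=
    match l with
    | [] => ([], 0, None)
    | c :: l' =>
        match j with
        | O =>
            match c with
            | Leaf => (leaf_result k x :: l', 0, None)
            | Node _ _ _ _ => let '(c', n, o) := walk k x c in (c' :: l', n, o)
            end
        | S j' => let '(l'', n, o) := go j' l' in (c :: l'', n, o)
        end
    end.

Definition touch_at (k : opkind) (x : Z) (r : rep) : rep :=
  if Z.eqb (key r) x then touch k r else r.

Definition trigger (C im : nat) : bool := Nat.ltb im (4 * C).

Definition first_trigger (b : bool) (o : option nat) : option nat :=
  if b then Some 0 else option_map S o.

Definition untriggered (q : option nat) : bool :=
  match q with None => true | Some _ => false end.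

Lemma first_trigger_none C im o :
  untriggered (first_trigger (trigger C im) o) = true -> 4 * C <= im /\ untriggered o = true.
Proof.
  unfold first_trigger, trigger.
  destruct (Nat.ltb_spec im (4 * C)), o; simpl; intros Hq; try discriminate; lia.
Qed.

Lemma first_trigger_here C im o : first_trigger (trigger C im) o = Some 0 -> im < 4 * C.
Proof.
  unfold first_trigger, trigger.
  destruct (Nat.ltb_spec im (4 * C)), o; simpl; intros Hq; try discriminate; lia.
Qed.

Lemma first_trigger_below C im o d :
  first_trigger (trigger C im) o = Some (S d) -> 4 * C <= im /\ o = Some d.
Proof.
  unfold first_trigger, trigger.
  destruct (Nat.ltb_spec im (4 * C)), o; simpl; intros Hq; try discriminate.
  injection Hq as ->. auto.
Qed.

Lemma walk_node k x rs ch C im :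
  walk k x (Node rs ch C im) =
  if existsb (fun r => Z.eqb (key r) x) rs then
    (Node (map (touch_at k x) rs) ch (S C) im, 1,
     first_trigger (trigger (S C) im) None)
  else
    let '(ch', n, o) := go_walk k x (child_index x rs) ch in
    (Node rs ch' (S C) im, S n, first_trigger (trigger (S C) im) o).
Proof. reflexivity. Qed.

Lemma go_walk_nth k x j l :
  go_walk k x j l =
  match nth_error l j with
  | None => (l, 0, None)
  | Some c => let '(c', n, o) := walk k x c in (replace_nth j c' l, n, o)
  end.
Proof.
  revert j; induction l as [|c l IH]; intros [|j];
    cbn [go_walk nth_error replace_nth]; auto.
  - destruct c; auto.
  - fold (go_walk k x). rewrite IH.
    destruct (nth_error l j) as [c'|]; auto.
    destruct (walk k x c') as [[? ?] ?]; auto.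
Qed.

Lemma map_touch_absent k x rs :
  existsb (fun r => Z.eqb (key r) x) rs = false -> map (touch_at k x) rs = rs.
Proof.
  induction rs as [|r rs IH]; simpl; auto.
  intros [Hr Hrs]%Bool.orb_false_iff. unfold touch_at at 1. now rewrite Hr, IH.
Qed.

Inductive walk_rel (k : opkind) (x : Z) : gsat -> gsat -> nat -> option nat -> Prop :=
| walk_leaf : walk_rel k x Leaf (leaf_result k x) 0 None
| walk_stop rs ch C im :
    walk_rel k x (Node rs ch C im) (Node (map (touch_at k x) rs) ch (S C) im) 1
             (first_trigger (trigger (S C) im) None)
| walk_down rs ch C im c cw n o :
    nth_error ch (child_index x rs) = Some c -> walk_rel k x c cw n o ->
    walk_rel k x (Node rs ch C im)
             (Node rs (replace_nth (child_index x rs) cw ch) (S C) im) (S n)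
             (first_trigger (trigger (S C) im) o).

Lemma walk_rel_of_walk k x t tw n q :
  walk k x t = (tw, n, q) -> walk_rel k x t tw n q.
Proof.
  revert tw n q; induction t as [|rs ch C im IH] using gsat_ind'; intros tw n q Hw.
  - injection Hw as <- <- <-. constructor.
  - rewrite walk_node in Hw.
    destruct (existsb _ rs) eqn:Hx; [injection Hw as <- <- <-; constructor|].
    rewrite go_walk_nth in Hw.
    destruct (nth_error ch (child_index x rs)) as [c|] eqn:Hc.
    + destruct (walk k x c) as [[cw m] o] eqn:Hwc. injection Hw as <- <- <-.
      eapply walk_down; eauto. exact (Forall_nth_error _ _ _ _ IH Hc _ _ _ Hwc).
    + injection Hw as <- <- <-.
      rewrite <- (map_touch_absent k x rs Hx) at 2. constructor.
Qed.

(** * Potential and invariant *)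

Fixpoint phi (t : gsat) : nat :=
  match t with Leaf => 0 | Node _ ch C _ => C + list_sum (map phi ch) end.

Definition imof (t : gsat) : nat := match t with Leaf => 0 | Node _ _ _ im => im end.

(** The invariant; with [strict = false] the counter condition 4 C <= im is
    dropped, which describes trees between a walk and its rebuild. *)
Inductive inv (strict : bool) : gsat -> Prop :=
| inv_leaf : inv strict Leaf
| inv_node rs ch C im :
    (strict = true -> 4 * C <= im) ->
    1 <= im ->
    Forall (fun r => 1 <= ac r) rs ->
    NoDup (map key rs) ->
    mass (Node rs ch C im) <= im + C ->
    Forall (fun c => 2 * mass c <= im + 2 * C /\ 2 * imof c <= im + 2 * C) ch ->
    Forall (inv strict) ch ->
    inv strict (Node rs ch C im).

Lemma inv_mono s s' : (s' = true -> s = true) -> forall t, inv s t -> inv s' t.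
Proof.
  intros Hs t. induction t as [|rs ch C im IH] using gsat_ind'; intros Ht;
    inversion Ht; subst; constructor; auto.
  rewrite Forall_forall in *; auto.
Qed.

Lemma inv_acs s t : inv s t -> Forall (fun r => 1 <= ac r) (all_reps t).
Proof.
  induction t as [|rs ch C im IH] using gsat_ind'; intros Ht; [constructor|].
  inversion Ht as [|? ? ? ? _ _ Hac _ _ _ Hch]; subst.
  rewrite all_reps_node, Forall_app, Forall_flat_map. split; auto.
  rewrite Forall_forall in *. auto.
Qed.

Lemma touch_at_sum k x rs :
  NoDup (map key rs) ->
  list_sum (map ac (map (touch_at k x) rs)) <= list_sum (map ac rs) + 1.
Proof.
  induction rs as [|r rs IH]; simpl; intros Hnd; [lia|].
  inversion Hnd as [|? ? Hr Hrs]; subst. unfold touch_at at 1.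
  destruct (Z.eqb (key r) x) eqn:E; [|specialize (IH Hrs); lia].
  apply Z.eqb_eq in E. rewrite map_touch_absent.
  - destruct k; simpl; lia.
  - apply Bool.not_true_iff_false. intros [r' [Hr' E']]%existsb_exists.
    apply Z.eqb_eq in E'. apply Hr. rewrite E, <- E'. now apply in_map.
Qed.

Lemma inv_touch s k x rs ch C im :
  inv true (Node rs ch C im) -> (s = true -> 4 * S C <= im) ->
  inv s (Node (map (touch_at k x) rs) ch (S C) im).
Proof.
  intros Ht Hs. inversion Ht as [|? ? ? ? _ Him1 Hac Hnd Hmass Hchb Hch]; subst.
  assert (Hkey : map key (map (touch_at k x) rs) = map key rs).
  { rewrite map_map. apply map_ext. intros r. unfold touch_at.
    destruct (Z.eqb (key r) x), k; reflexivity. }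
  pose proof (touch_at_sum k x rs Hnd).
  constructor; auto.
  - rewrite Forall_map. eapply Forall_impl; [|exact Hac]. intros r Hr.
    unfold touch_at. destruct (Z.eqb (key r) x), k; simpl in *; lia.
  - now rewrite Hkey.
  - rewrite mass_node in *. lia.
  - eapply Forall_impl; [|exact Hchb]. simpl. lia.
  - eapply Forall_impl; [|exact Hch]. apply inv_mono; auto.
Qed.

Lemma inv_replace_child s rs ch C im j c c' :
  inv true (Node rs ch C im) -> (s = true -> 4 * S C <= im) ->
  nth_error ch j = Some c -> inv s c' -> mass c' <= mass c + 1 ->
  2 * imof c' <= im + 2 * S C ->
  inv s (Node rs (replace_nth j c' ch) (S C) im).
Proof.
  intros Ht Hs Hc Hc' Hm Him.
  inversion Ht as [|? ? ? ? _ Him1 Hac Hnd Hmass Hchb Hch]; subst.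
  pose proof (replace_nth_sum mass ch j c c' Hc).
  pose proof (Forall_nth_error _ _ _ _ Hchb Hc) as [Hmc _].
  constructor; auto.
  - rewrite mass_node in *. lia.
  - apply Forall_replace_nth; [|lia].
    eapply Forall_impl; [|exact Hchb]. simpl. lia.
  - apply Forall_replace_nth; auto.
    eapply Forall_impl; [|exact Hch]. apply inv_mono; auto.
Qed.

Lemma leaf_result_facts s k x : inv s (leaf_result k x) /\ mass (leaf_result k x) <= 1.
Proof. destruct k; simpl; repeat split; repeat constructor; simpl; lia. Qed.

(** * Walks *)

Section Walk.
Variables (k : opkind) (x : Z).

(** Every visited node has its counter raised by one. *)
Lemma walk_phi t tw n q : walk_rel k x t tw n q -> phi tw = phi t + n.
Proof.
  induction 1 as [|rs ch C im|rs ch C im c cw n o Hc _ IH]; simpl.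
  - now destruct k.
  - lia.
  - pose proof (replace_nth_sum phi ch _ c cw Hc). lia.
Qed.

(** Only a node created at the end of the path gets a new im, namely 1. *)
Lemma walk_imof t tw n q : walk_rel k x t tw n q -> imof tw <= Nat.max 1 (imof t).
Proof.
  destruct 1; cbn [imof]; [destruct k; simpl|..]; lia.
Qed.

Lemma walk_inv t tw n q :
  inv true t -> walk_rel k x t tw n q -> inv (untriggered q) tw /\ mass tw <= mass t + 1.
Proof.
  intros Ht Hw. revert Ht.
  induction Hw as [|rs ch C im|rs ch C im c cw n o Hc Hwc IH]; intros Ht.
  - pose proof (leaf_result_facts (untriggered None) k x). simpl; tauto.
  - split.
    + apply inv_touch; auto. now intros [? _]%first_trigger_none.
    + inversion Ht as [|? ? ? ? _ _ _ Hnd _ _ _]; subst.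
      pose proof (touch_at_sum k x rs Hnd). rewrite !mass_node. lia.
  - inversion Ht as [|? ? ? ? _ Him1 _ _ _ Hchb Hch]; subst.
    destruct (IH (Forall_nth_error _ _ _ _ Hch Hc)) as [Hcw Hm].
    pose proof (Forall_nth_error _ _ _ _ Hchb Hc) as [_ Himc].
    pose proof (walk_imof _ _ _ _ Hwc).
    pose proof (replace_nth_sum mass ch _ c cw Hc).
    split.
    + eapply inv_replace_child; eauto; [| |lia].
      * now intros [? _]%first_trigger_none.
      * eapply inv_mono; [|exact Hcw]. now intros [_ ?]%first_trigger_none.
    + rewrite !mass_node. lia.
Qed.

(** Search paths are logarithmic: im shrinks by a factor 3/4 per level, so
    (4/3)^(n-1) <= im at the root. *)
Lemma walk_depth t tw n q :
  inv true t -> walk_rel k x t tw n q -> 3 * 4 ^ n <= 4 * 3 ^ n * Nat.max 1 (imof t).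
Proof.
  intros Ht Hw. revert Ht.
  induction Hw as [|rs ch C im|rs ch C im c cw n o Hc Hwc IH]; intros Ht;
    cbn [imof]; [simpl; lia | rewrite !Nat.pow_1_r; lia |].
  inversion Ht as [|? ? ? ? Hcnt Him1 _ _ _ Hchb Hch]; subst.
  specialize (IH (Forall_nth_error _ _ _ _ Hch Hc)).
  pose proof (Forall_nth_error _ _ _ _ Hchb Hc) as [_ Himc].
  specialize (Hcnt eq_refl).
  destruct n as [|n']; [rewrite !Nat.pow_1_r; lia|].
  assert (Hc1 : 1 <= imof c).
  { destruct c as [|rsc chc Cc imc]; [inversion Hwc|].
    pose proof (Forall_nth_error _ _ _ _ Hch Hc) as Hci. now inversion Hci. }
  rewrite Nat.max_r in IH by lia. rewrite Nat.max_r by lia.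
  assert (4 * imof c <= 3 * im) by lia.
  rewrite (Nat.pow_succ_r' 4 (S n')), (Nat.pow_succ_r' 3 (S n')). nia.
Qed.

End Walk.

(** * Rebuilding *)

Lemma fresh_phi t : fresh t -> phi t = 0.
Proof.
  induction t as [|rs ch C im IH] using gsat_ind'; intros Hf; [reflexivity|].
  inversion Hf as [|? ? Hch]; subst; simpl. clear Hf.
  revert Hch; induction IH as [|c ch Hc _ IHch]; intros Hch; inversion Hch; subst;
    simpl; auto.
  rewrite Hc, IHch; auto.
Qed.

Lemma fresh_imof t : fresh t -> imof t = mass t.
Proof. now destruct 1. Qed.

Lemma fresh_node_inv rs ch C im :
  fresh (Node rs ch C im) -> C = 0 /\ im = mass (Node rs ch 0 0) /\ Forall fresh ch.
Proof. now inversion 1. Qed.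

(** A child of an ideal node weighs at most half of it, since D >= 1. *)
Lemma half_of_ratio (d : R) (a b : nat) :
  (1 <= d)%R -> (INR a <= INR b / (d + 1))%R -> 2 * a <= b.
Proof.
  intros Hd Hab. apply INR_le. rewrite mult_INR. simpl (INR 2).
  apply (Rmult_le_compat_r (d + 1)) in Hab; [|lra].
  unfold Rdiv in Hab. rewrite Rmult_assoc, Rinv_l in Hab by lra.
  pose proof (pos_INR a). nra.
Qed.

Lemma sorted_nodup (l : list Z) : Sorted Z.lt l -> NoDup l.
Proof.
  intros H. apply Sorted_StronglySorted in H; [|intros a b c; lia].
  induction H as [|a l _ IH Ha]; constructor; auto.
  rewrite Forall_forall in Ha. intros Hin. specialize (Ha a Hin). lia.
Qed.

Lemma fresh_ideal_inv (D : nat -> R) (HD1 : forall m, (1 <= D m)%R) t :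
  ideal D t -> fresh t -> Forall (fun r => 1 <= ac r) (all_reps t) -> inv true t.
Proof.
  induction t as [|rs ch C im IH] using gsat_ind'; intros Hid Hf Hac; [constructor|].
  destruct (fresh_node_inv _ _ _ _ Hf) as (-> & -> & Hfch).
  inversion Hid as [|? ? ? ? Hne Hsort _ _ Hmass Hidch]; subst.
  rewrite all_reps_node, Forall_app, Forall_flat_map in Hac. destruct Hac as [Hac1 Hac2].
  rewrite Forall_forall in *.
  assert (Hhalf : forall c, In c ch -> 2 * mass c <= mass (Node rs ch 0 0)).
  { intros c Hc. exact (half_of_ratio _ _ _ (HD1 _) (Hmass c Hc)). }
  constructor; rewrite ?Forall_forall; auto.
  - lia.
  - destruct rs as [|r rs]; [congruence|].
    specialize (Hac1 r (in_eq _ _)). rewrite mass_node. simpl. lia.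
  - apply sorted_nodup; auto.
  - rewrite !mass_node. lia.
  - intros c Hc. rewrite fresh_imof by auto. specialize (Hhalf c Hc).
    rewrite !mass_node in *. lia.
Qed.

Lemma filter_ac_sum (f : rep -> bool) l :
  list_sum (map ac (filter f l)) <= list_sum (map ac l).
Proof. induction l as [|r l IH]; simpl; auto. destruct (f r); simpl; lia. Qed.

Lemma rebuild_ok_facts (D : nat -> R) (HD1 : forall m, (1 <= D m)%R) t t' :
  Forall (fun r => 1 <= ac r) (all_reps t) -> rebuild_ok D t t' ->
  inv true t' /\ mass t' <= mass t /\ phi t' = 0 /\ imof t' = mass t'.
Proof.
  intros Hac (Hid & Hf & _ & Hp).
  apply (Permutation_map snd) in Hp. rewrite !map_map in Hp. simpl in Hp.
  change (fun r : rep => ac r) with ac in Hp.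
  assert (Hac' : Forall (fun r => 1 <= ac r) (all_reps t')).
  { rewrite Forall_forall in *. intros r Hr.
    assert (Hin : In (ac r) (map ac (all_reps t'))) by now apply in_map.
    eapply Permutation_in in Hin; [|exact Hp].
    apply in_map_iff in Hin as (r0 & <- & Hr0). apply filter_In in Hr0 as [Hr0 _]. auto. }
  repeat split; eauto using fresh_ideal_inv, fresh_phi, fresh_imof.
  rewrite !mass_reps, (Permutation_list_sum Hp). apply filter_ac_sum.
Qed.

Definition rebuild_sound (tw t' : gsat) (rc : nat) : Prop :=
  inv true t' /\ mass t' <= mass tw /\ imof t' <= Nat.max (imof tw) (mass tw) /\
  rc + 5 * phi t' <= 5 * phi tw.

Definition overfull (t : gsat) : Prop :=
  match t with Leaf => False | Node _ _ C im => im < 4 * C end.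

(** Rebuilding an overfull node costs its mass m <= im + C < 5 C. *)
Lemma rebuild_overfull (D : nat -> R) (HD1 : forall m, (1 <= D m)%R) t t' :
  inv false t -> overfull t -> rebuild_ok D t t' -> rebuild_sound t t' (mass t).
Proof.
  intros Ht Hov Hok.
  destruct (rebuild_ok_facts D HD1 t t' (inv_acs _ _ Ht) Hok) as (Ht' & Hm & Hphi & Him).
  repeat split; auto; [lia|].
  destruct t as [|rs ch C im]; [contradiction|].
  inversion Ht; subst. simpl in Hov. rewrite Hphi. cbn [phi]. lia.
Qed.

Lemma rebuild_sound_down rs ch C im j c cw c' rc :
  inv true (Node rs ch C im) -> 4 * S C <= im -> nth_error ch j = Some c ->
  mass cw <= mass c + 1 -> imof cw <= Nat.max 1 (imof c) ->
  rebuild_sound cw c' rc ->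
  rebuild_sound (Node rs (replace_nth j cw ch) (S C) im) (Node rs (replace_nth j c' ch) (S C) im) rc.
Proof.
  intros Ht HC Hc Hmcw Himcw (Hc' & Hmc' & Himc' & Hpay).
  inversion Ht as [|? ? ? ? _ _ _ _ _ Hchb _]; subst.
  pose proof (Forall_nth_error _ _ _ _ Hchb Hc) as [Hmc Himc].
  pose proof (nth_error_replace_nth ch j c cw Hc) as Hcw.
  pose proof (replace_nth_sum mass _ _ _ c' Hcw) as Hmass.
  pose proof (replace_nth_sum phi _ _ _ c' Hcw) as Hphi.
  rewrite replace_nth_replace_nth in Hmass, Hphi.
  repeat split.
  - eapply inv_replace_child; eauto; lia.
  - rewrite !mass_node. lia.
  - cbn [imof]. lia.
  - cbn [phi]. lia.
Qed.

Section WalkRebuild.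
Variables (D : nat -> R) (HD1 : forall m, (1 <= D m)%R) (k : opkind) (x : Z).

Lemma walk_overfull t tw n q : walk_rel k x t tw n q -> q = Some 0 -> overfull tw.
Proof.
  destruct 1; intros Hq; [discriminate| |]; exact (first_trigger_here _ _ _ Hq).
Qed.

Lemma walk_rebuild_here t tw n q t' :
  inv true t -> walk_rel k x t tw n q -> q = Some 0 -> rebuild_ok D tw t' ->
  rebuild_sound tw t' (mass tw).
Proof.
  intros Ht Hw Hq. apply rebuild_overfull; auto; [|eapply walk_overfull; eauto].
  subst q. exact (proj1 (walk_inv k x t tw n (Some 0) Ht Hw)).
Qed.

Lemma walk_rebuild t tw n q d t' rc :
  inv true t -> walk_rel k x t tw n q -> q = Some d -> rebuild_at D x d tw t' rc ->
  rebuild_sound tw t' rc.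
Proof.
  intros Ht Hw. revert Ht d t' rc.
  induction Hw as [|rs ch C im|rs ch C im c cw n o Hc Hwc IH];
    intros Ht d t' rc Hq Hrb; [discriminate| |].
  - destruct d as [|d]; [|now apply first_trigger_below in Hq as [_ ?]].
    inversion Hrb; subst. eapply walk_rebuild_here; eauto. apply walk_stop.
  - destruct d as [|d].
    { inversion Hrb; subst. eapply walk_rebuild_here; eauto. eapply walk_down; eauto. }
    apply first_trigger_below in Hq as [HC ->].
    inversion Ht as [|? ? ? ? _ _ _ _ _ _ Hch]; subst.
    assert (Hct : inv true c) by exact (Forall_nth_error _ _ _ _ Hch Hc).
    inversion Hrb as [|d0 rs0 ch0 C0 im0 c0 c' rc0 Hn Hrb']; subst.
    rewrite (nth_error_replace_nth _ _ _ _ Hc) in Hn. injection Hn as <-.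
    rewrite replace_nth_replace_nth.
    eapply rebuild_sound_down; eauto.
    + exact (proj2 (walk_inv k x c cw n (Some d) Hct Hwc)).
    + exact (walk_imof k x c cw n _ Hwc).
Qed.

End WalkRebuild.

Lemma op_step_amortized (D : nat -> R) (HD1 : forall m, (1 <= D m)%R) o t t' cost M :
  inv true t -> Nat.max 1 (imof t) <= M -> mass t + 1 <= M -> op_step D o t t' cost ->
  inv true t' /\ Nat.max 1 (imof t') <= M /\ mass t' <= mass t + 1 /\
  exists n, cost + 5 * phi t' <= 5 * phi t + 6 * n /\ 3 * 4 ^ n <= 4 * 3 ^ n * M.
Proof.
  intros Ht Him Hm Hs. destruct o as [k x]. unfold op_step in Hs.
  destruct (walk k x t) as [[tw n] q] eqn:Hw. apply walk_rel_of_walk in Hw.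
  destruct (walk_inv k x t tw n q Ht Hw) as [Htw Hmtw].
  pose proof (walk_phi k x t tw n q Hw) as Hphi.
  pose proof (walk_imof k x t tw n q Hw) as Himtw.
  assert (Hdepth : 3 * 4 ^ n <= 4 * 3 ^ n * M).
  { eapply Nat.le_trans; [exact (walk_depth k x t tw n q Ht Hw)|].
    apply Nat.mul_le_mono_l, Him. }
  destruct q as [d|].
  - destruct Hs as (rc & Hrb & ->).
    destruct (walk_rebuild D HD1 k x t tw n (Some d) d t' rc Ht Hw eq_refl Hrb)
      as (Ht' & Hmt' & Himt' & Hpay).
    split; [auto|split; [lia|split; [lia|exists n; split; [lia|exact Hdepth]]]].
  - destruct Hs as [-> ->].
    split; [auto|split; [lia|split; [lia|exists n; split; [lia|exact Hdepth]]]].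
Qed.

Open Scope R_scope.

Lemma ln_le_ln a b : 0 < a -> a <= b -> ln a <= ln b.
Proof. intros Ha [Hab|<-]; [apply Rlt_le, ln_increasing|apply Rle_refl]; auto. Qed.

Lemma ln_4_3 : ln (4 / 3) = ln 4 - ln 3.
Proof. unfold Rdiv. rewrite ln_mult, ln_Rinv by lra. ring. Qed.

Lemma ln_4_3_pos : 0 < ln (4 / 3).
Proof. rewrite <- ln_1. apply ln_increasing; lra. Qed.

Definition depth_bound (M : nat) : R := 1 + ln (INR M) / ln (4 / 3).

(** [3 * 4^n <= 4 * 3^n * M] means (4/3)^(n-1) <= M. *)
Lemma depth_le_log (M n : nat) :
  (3 * 4 ^ n <= 4 * 3 ^ n * M)%nat -> INR n <= depth_bound M.
Proof.
  intros H. apply le_INR in H. rewrite !mult_INR, !pow_INR in H.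
  replace (INR 3) with 3 in H by (simpl; lra). replace (INR 4) with 4 in H by (simpl; lra).
  assert (P4 : 0 < 4 ^ n) by (apply pow_lt; lra).
  assert (P3 : 0 < 3 ^ n) by (apply pow_lt; lra).
  assert (HM : 0 < INR M).
  { apply (Rmult_lt_reg_l (4 * 3 ^ n)); nra. }
  apply ln_le_ln in H; [|nra].
  rewrite !ln_mult, !ln_pow in H by (try apply Rmult_lt_0_compat; lra).
  pose proof ln_4_3_pos as L. rewrite ln_4_3 in L.
  assert (Hl : (INR n - 1) * (ln 4 - ln 3) <= ln (INR M)) by nra.
  replace (INR n) with (1 + (INR n - 1) * (ln 4 - ln 3) / (ln 4 - ln 3)) by (field; lra).
  unfold depth_bound. rewrite ln_4_3. apply Rplus_le_compat_l.
  unfold Rdiv. apply Rmult_le_compat_r; [left; apply Rinv_0_lt_compat|]; lra.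
Qed.

Lemma depth_bound_le_ln (m : nat) :
  (2 <= m)%nat -> depth_bound m <= (/ ln 2 + / ln (4 / 3)) * ln (INR m).
Proof.
  intros Hm. apply le_INR in Hm. replace (INR 2) with 2 in Hm by (simpl; lra).
  assert (L2 : 0 < ln 2) by (rewrite <- ln_1; apply ln_increasing; lra).
  assert (Hl : ln 2 <= ln (INR m)) by (apply ln_le_ln; lra).
  assert (Hge1 : 1 <= ln (INR m) * / ln 2).
  { apply (Rmult_le_reg_r (ln 2)); auto. rewrite Rmult_assoc, Rinv_l; lra. }
  unfold depth_bound, Rdiv. lra.
Qed.

Lemma exec_amortized (D : nat -> R) (HD1 : forall m, 1 <= D m) (M : nat)
  t ops t2 cost :
  exec D t ops t2 cost -> inv true t -> (Nat.max 1 (imof t) <= M)%nat ->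
  (mass t + length ops <= M)%nat ->
  INR cost + 5 * INR (phi t2) <= 5 * INR (phi t) + 6 * INR (length ops) * depth_bound M.
Proof.
  induction 1 as [t|t t1 t2 o os c1 c2 Hs _ IH]; intros Ht Him Hm; simpl length in *.
  - simpl. lra.
  - destruct (op_step_amortized D HD1 o t t1 c1 M Ht Him ltac:(lia) Hs)
      as (Ht1 & Him1 & Hm1 & n & Hpay & Hdepth).
    specialize (IH Ht1 Him1 ltac:(lia)).
    pose proof (depth_le_log M n Hdepth) as Hn.
    apply le_INR in Hpay. rewrite !plus_INR, !mult_INR in Hpay.
    replace (INR 5) with 5 in Hpay by (simpl; lra).
    replace (INR 6) with 6 in Hpay by (simpl; lra).
    rewrite plus_INR, S_INR. lra.
Qed.

Theorem lemma2 (D : nat -> R) (HD : sqrt_bounded D) :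
  exists c : R, forall (ops : list operation) (t : gsat) (cost : nat),
    exec D Leaf ops t cost -> (2 <= length ops)%nat ->
    INR cost <= c * INR (length ops) * ln (INR (length ops)).
Proof.
  destruct HD as [HD1 _].
  exists (6 * (/ ln 2 + / ln (4 / 3))).
  intros ops t cost He Hlen.
  pose proof (exec_amortized D HD1 (length ops) Leaf ops t cost He (inv_leaf true)
                ltac:(simpl; lia) ltac:(simpl; lia)) as Hb.
  simpl (INR (phi Leaf)) in Hb. pose proof (pos_INR (phi t)).
  apply Rle_trans with (6 * INR (length ops) * depth_bound (length ops)); [lra|].
  replace (6 * (/ ln 2 + / ln (4 / 3)) * INR (length ops) * ln (INR (length ops)))
    with (6 * INR (length ops) * ((/ ln 2 + / ln (4 / 3)) * ln (INR (length ops)))) by ring.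
  apply Rmult_le_compat_l; [pose proof (pos_INR (length ops)); lra|].
  exact (depth_bound_le_ln _ Hlen).
Qed.
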